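(* Let $n\ge2$ and $P=(a_1,\dots,a_{n-1},0)$ with $0<a_i<\tfrac12$ for all $i\le n-1$. Then the vertices of $\mathcal R(P)$ are exactly the following points. (1) Standard vertices: for each labeled set $S\subset[\![n-1]\!]$ with $0\le K(S)\le1$, the points $v_S^\pm$ with coordinates $x_i=a_i-\tfrac12+\varepsilon_i$ for $i\in S$, $x_i=\tfrac12-a_i$ for $i\in\widetilde S$, and $x_n=\pm K(S)$ (if $K(S)=0$ then $v_S^+=v_S^-$). (2) Middle vertices: for each labeled set $S$ and $k\in S$ with $K(S)<0<K(S\setminus\{k\})$, the point $v^0_{S,k}$ with $x_i=a_i-\tfrac12+\varepsilon_i$ for $i\in S\setminus\{k\}$, $x_i=\tfrac12-a_i$ for $i\in\widetilde S$, $x_k=a_k-\tfrac12+\varepsilon_k-\frac{K(S)}{2a_k-\varepsilon_k}$, and $x_n=0$. (3) Truncating vertices: for each labeled set $S$ and $k\notin S$ together with a label $\varepsilon_k\in\{0,1\}$ such that $K(S\cup\{k\})<1<K(S)$, the points $v^\pm_{S,k}$ with $x_i=a_i-\tfrac12+\varepsilon_i$ for $i\in S$, $x_i=\tfrac12-a_i$ for $i\in\widetilde S\setminus\{k\}$, $x_k=a_k-\tfrac12+\varepsilon_k+\frac{1-K(S\cup\{k\})}{2a_k-\varepsilon_k}$, and $x_n=\pm1$. There are no other vertices of $\mathcal R(P)$.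
   Context: For $P=(a_1,\dots,a_{n-1},0)$ with $0<a_i<\tfrac12$, $\mathcal R(P)\subset\mathbb R^n$ is the polytope defined by the inequalities: $a_i-\tfrac12\le x_i\le a_i+\tfrac12$ for $1\le i\le n-1$; $-1\le x_n\le 1$; and for every $\delta=(\delta_1,\dots,\delta_{n-1})\in\{0,1\}^{n-1}$, $x_n\le\tfrac12+\sum_{i=1}^{n-1}(2a_i-\delta_i)(x_i-\tfrac12\delta_i)$ and $x_n\ge-\tfrac12-\sum_{i=1}^{n-1}(2a_i-\delta_i)(x_i-\tfrac12\delta_i)$. (This is the set of points $Q$ at least as close to $P$ as to any point of the $\sim$-orbit ''neighbours'' of $P$, where $\sim$ on $\mathbb R^n$ is generated by $x\sim x+e_i$, $i\le n-1$, and $(x_1,\dots,x_n)\sim(1-x_1,\dots,1-x_{n-1},x_n+1)$.) Write $[\![n-1]\!]=\{1,\dots,n-1\}$. A labeled set is a subset $S\subset[\![n-1]\!]$ together with a function $S\to\{0,1\}$, $i\mapsto\varepsilon_i$. For $0<a\le\tfrac12$ put $\Delta_a=a-2a^2=\tfrac18-2(a-\tfrac14)^2$; $\Delta(S)=\sum_{i\in S}\Delta_{a_i}$; $\widetilde S=[\![n-1]\!]\setminus S$; and $K(S)=\tfrac12-\Delta(S)+\Delta(\widetilde S)$ (depending only on the underlying set of $S$). *)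

(* the statement is purely order/field-theoretic, stated over
   an arbitrary real field R (this includes the real numbers). *)
From HB Require Import structures.
From mathcomp Require Import all_boot all_order all_algebra.
Set Implicit Arguments. Unset Strict Implicit. Unset Printing Implicit Defensive.
Import Order.TTheory GRing.Theory Num.Theory.
Local Open Scope ring_scope.

(* Throughout, n = m + 1.  Points of R^n are row vectors 'rV[R]_(m + 1);
   coordinate i in [[n-1]] (0-based index i : 'I_m) is  x 0 (lshift 1 i),
   and the last coordinate x_n is  x 0 (rshift m ord0).
   a : 'I_m -> R gives P = (a_1, ..., a_{n-1}, 0). *)

Definition xi (R : ringType) (m : nat) (x : 'rV[R]_(m + 1)) (i : 'I_m) : R :=
  x 0 (lshift 1 i).
Definition xn (R : ringType) (m : nat) (x : 'rV[R]_(m + 1)) : R :=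
  x 0 (rshift m (@ord0 0)).

Definition RP (R : realFieldType) (m : nat) (a : 'I_m -> R) (x : 'rV[R]_(m + 1)) : Prop :=
  (forall i : 'I_m, a i - 2^-1 <= xi x i <= a i + 2^-1) /\
  (-1 <= xn x <= 1) /\
  (forall delta : 'I_m -> bool,
     xn x <= 2^-1 + \sum_(i < m) (2 * a i - (delta i)%:R) * (xi x i - 2^-1 * (delta i)%:R)
     /\ - 2^-1 - \sum_(i < m) (2 * a i - (delta i)%:R) * (xi x i - 2^-1 * (delta i)%:R) <= xn x).

Definition is_vertex (R : realFieldType) (k : nat) (C : 'rV[R]_k -> Prop) (x : 'rV[R]_k) : Prop :=
  C x /\ forall (y z : 'rV[R]_k) (t : R), C y -> C z -> 0 < t < 1 ->
    x = t *: y + (1 - t) *: z -> y = z.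

Definition Delta_ (R : realFieldType) (t : R) : R := t - 2 * t ^+ 2.
Definition DeltaS (R : realFieldType) (m : nat) (a : 'I_m -> R) (S : {set 'I_m}) : R :=
  \sum_(i in S) Delta_ (a i).
Definition KS (R : realFieldType) (m : nat) (a : 'I_m -> R) (S : {set 'I_m}) : R :=
  2^-1 - DeltaS a S + DeltaS a (~: S).

Definition mkpt (R : ringType) (m : nat) (f : 'I_m -> R) (z : R) : 'rV[R]_(m + 1) :=
  row_mx (\row_(i < m) f i) (z%:M).

Definition base (R : realFieldType) (m : nat) (a : 'I_m -> R) (S : {set 'I_m})
  (eps : 'I_m -> bool) (i : 'I_m) : R :=
  if i \in S then a i - 2^-1 + (eps i)%:R else 2^-1 - a i.

Definition standard_vertex (R : realFieldType) (m : nat) (a : 'I_m -> R) (x : 'rV[R]_(m + 1)) : Prop :=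
  exists (S : {set 'I_m}) (eps : 'I_m -> bool) (s : bool),
    0 <= KS a S <= 1 /\ x = mkpt (base a S eps) ((-1) ^+ s * KS a S).

Definition middle_vertex (R : realFieldType) (m : nat) (a : 'I_m -> R) (x : 'rV[R]_(m + 1)) : Prop :=
  exists (S : {set 'I_m}) (eps : 'I_m -> bool) (k : 'I_m),
    k \in S /\ KS a S < 0 < KS a (S :\ k) /\
    x = mkpt (fun i => if i == k
                       then a k - 2^-1 + (eps k)%:R - KS a S / (2 * a k - (eps k)%:R)
                       else base a S eps i) 0.

Definition truncating_vertex (R : realFieldType) (m : nat) (a : 'I_m -> R) (x : 'rV[R]_(m + 1)) : Prop :=
  exists (S : {set 'I_m}) (eps : 'I_m -> bool) (k : 'I_m) (s : bool),
    k \notin S /\ KS a (k |: S) < 1 < KS a S /\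
    x = mkpt (fun i => if i == k
                       then a k - 2^-1 + (eps k)%:R + (1 - KS a (k |: S)) / (2 * a k - (eps k)%:R)
                       else base a S eps i) ((-1) ^+ s).

(* Write a point of R(P) as (h, z) with h in R^(n-1). For fixed h the 2^(n-1)
   cut inequalities are minimised coordinatewise, so they collapse to
   |z| <= 1/2 + sum_i g_i(h_i) with g_i(t) = min(2 a_i t, (2 a_i - 1)(t - 1/2)),
   a concave piecewise linear function with its kink at t = 1/2 - a_i.
   Call a coordinate free if it lies strictly inside its box and off the kink.
   At a vertex at most one coordinate is free: two free ones can be moved in
   opposite directions without changing sum_i g_i. Without free coordinates h
   is the point of the labeled set S of coordinates on the box boundary,
   sum_i g_i = K(S) - 1/2, and a vertex needs |z| = K(S) (standard vertex).
   With one free coordinate k the constraint on |z| must be tight and |z| must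
   be 0 or 1; solving for h_k gives the middle and truncating vertices.
   Conversely, each listed point is the only point of R(P) on which all the
   constraints tight at it are still tight. *)
From HB Require Import structures.
From mathcomp Require Import all_boot all_order all_algebra.
From mathcomp Require Import ring lra.
Import Order.TTheory GRing.Theory Num.Theory.
Set Implicit Arguments. Unset Strict Implicit. Unset Printing Implicit Defensive.
Local Open Scope ring_scope.

Lemma exists_pos_le2 (R : realFieldType) (p q : R) : 0 < p -> 0 < q ->
  exists2 u : R, 0 < u & u <= p /\ u <= q.
Proof.
move=> hp hq; case: (lerP p q) => h.
- by exists p => //; split.
- by exists q => //; split; [apply: ltW|].
Qed.

Lemma convex_eq_ub (R : realFieldType) (p q c t : R) : p <= c -> q <= c -> 0 < t < 1 ->
  c = t * p + (1 - t) * q -> p = c.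
Proof.
move=> hp hq /andP[t0 t1] e; apply/eqP; rewrite eq_le hp /= leNgt; apply/negP => hlt.
have : 0 < t * (c - p) by apply: mulr_gt0; lra.
have : 0 <= (1 - t) * (c - q) by apply: mulr_ge0; lra.
nra.
Qed.

Lemma convex_eq_lb (R : realFieldType) (p q c t : R) : c <= p -> c <= q -> 0 < t < 1 ->
  c = t * p + (1 - t) * q -> p = c.
Proof.
move=> hp hq ht e; apply/eqP; rewrite -eqr_opp; apply/eqP.
apply: (convex_eq_ub (q := - q) (t := t)); rewrite ?lerN2 //; lra.
Qed.

Lemma signr_le_norm (R : realDomainType) (s : bool) (u : R) : (-1) ^+ s * u <= `|u|.
Proof. by rewrite mulr_sign; case: s; rewrite ?ler_norm // -normrN ler_norm. Qed.

Lemma sum_ord_update (V : zmodType) (m : nat) (F G : 'I_m -> V) k :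
  (forall j, j != k -> F j = G j) -> \sum_(j < m) F j = \sum_(j < m) G j + (F k - G k).
Proof.
move=> h; rewrite (bigD1 k) //= [in RHS](bigD1 k) //= (eq_bigr G) => [|j /h //].
by rewrite [RHS]addrAC [G k + _]addrCA subrr addr0.
Qed.

Section Points.
Variables (R : nzRingType) (m : nat).

Lemma xi_mkpt (f : 'I_m -> R) z i : xi (mkpt f z) i = f i.
Proof. by rewrite /xi /mkpt row_mxEl mxE. Qed.

Lemma xn_mkpt (f : 'I_m -> R) z : xn (mkpt f z) = z.
Proof. by rewrite /xn /mkpt row_mxEr mxE eqxx mulr1n. Qed.

Lemma pt_ext (x y : 'rV[R]_(m + 1)) :
  (forall i, xi x i = xi y i) -> xn x = xn y -> x = y.
Proof.
move=> h1 h2; rewrite -[x]hsubmxK -[y]hsubmxK; congr row_mx; apply/rowP => j; rewrite !mxE.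
  exact: h1.
by rewrite [j]ord1; exact: h2.
Qed.

Lemma mkpt_eta (x : 'rV[R]_(m + 1)) : x = mkpt (xi x) (xn x).
Proof. by apply: pt_ext => [i|]; rewrite ?xi_mkpt ?xn_mkpt. Qed.

Lemma eq_mkpt (f f' : 'I_m -> R) z : f =1 f' -> mkpt f z = mkpt f' z.
Proof. by move=> h; apply: pt_ext => [i|]; rewrite ?xi_mkpt ?xn_mkpt. Qed.

Lemma mkpt_inj (f f' : 'I_m -> R) z z' :
  mkpt f z = mkpt f' z' -> f =1 f' /\ z = z'.
Proof.
move=> e; split => [i|]; first by rewrite -(xi_mkpt f z i) e xi_mkpt.
by rewrite -(xn_mkpt f z) e xn_mkpt.
Qed.

Lemma xiD_scale (x y : 'rV[R]_(m + 1)) t s i :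
  xi (t *: x + s *: y) i = t * xi x i + s * xi y i.
Proof. by rewrite /xi !mxE. Qed.

Lemma xnD_scale (x y : 'rV[R]_(m + 1)) t s : xn (t *: x + s *: y) = t * xn x + s * xn y.
Proof. by rewrite /xn !mxE. Qed.

End Points.

Section Polytope.
Variables (R : realFieldType) (m : nat) (a : 'I_m -> R).
Hypothesis ha : forall i, 0 < a i < 2^-1.
Implicit Types (T : {set 'I_m}) (eps : 'I_m -> bool) (i j k : 'I_m).

Definition cut_term (i : 'I_m) (d : bool) (t : R) : R := (2 * a i - d%:R) * (t - 2^-1 * d%:R).
Definition cut_sum (d : 'I_m -> bool) (h : 'I_m -> R) := \sum_(i < m) cut_term i (d i) (h i).
Definition cut_min i t := Num.min (cut_term i false t) (cut_term i true t).
Definition cut_min_sum (h : 'I_m -> R) := \sum_(i < m) cut_min i (h i).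
(* The label [d] for which [cut_term i d t] is minimal. *)
Definition kink_label i (t : R) := 2^-1 - a i < t.
Definition delta i := Delta_ (a i).

Lemma cut_term0 i t : cut_term i false t = 2 * a i * t.
Proof. by rewrite /cut_term /= subr0 mulr0 subr0. Qed.

Lemma cut_term1 i t : cut_term i true t = (2 * a i - 1) * (t - 2^-1).
Proof. by rewrite /cut_term /= mulr1. Qed.

Lemma cut_term01 i t : cut_term i false t - cut_term i true t = t + a i - 2^-1.
Proof. by rewrite cut_term0 cut_term1; field. Qed.

Lemma cut_termD i d t v : cut_term i d (t + v) = cut_term i d t + (2 * a i - d%:R) * v.
Proof. rewrite /cut_term; ring. Qed.

Lemma cut_term_affine i d t p q :
  cut_term i d (t * p + (1 - t) * q) = t * cut_term i d p + (1 - t) * cut_term i d q.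
Proof. rewrite /cut_term; ring. Qed.

Lemma cut_term_kink i d : cut_term i d (2^-1 - a i) = delta i.
Proof. by rewrite /cut_term /delta /Delta_; case: d => /=; field. Qed.

Lemma slope_neq0 i (d : bool) : 2 * a i - d%:R != 0.
Proof. have /andP[h1 h2] := ha i; case: d => /=; apply/eqP; lra. Qed.

Lemma norm_slopeM_le i (d : bool) (u : R) : `|(2 * a i - d%:R) * u| <= `|u|.
Proof.
rewrite normrM; apply: ler_piMl => //.
have /andP[h1 h2] := ha i; rewrite ler_norml; case: d => /=; apply/andP; split; lra.
Qed.

Lemma delta_gt0 i : 0 < delta i.
Proof. have /andP[h1 h2] := ha i; rewrite /delta /Delta_; nra. Qed.

Lemma cut_min_le i d t : cut_min i t <= cut_term i d t.
Proof. by rewrite /cut_min ge_min; case: d; rewrite lexx ?orbT. Qed.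

Lemma cut_min0 i t : t <= 2^-1 - a i -> cut_min i t = cut_term i false t.
Proof. by move=> ht; rewrite /cut_min min_l // -subr_le0 cut_term01; lra. Qed.

Lemma cut_min1 i t : 2^-1 - a i <= t -> cut_min i t = cut_term i true t.
Proof. by move=> ht; rewrite /cut_min min_r // -subr_ge0 cut_term01; lra. Qed.

Lemma cut_min_label i t : cut_min i t = cut_term i (kink_label i t) t.
Proof. by rewrite /kink_label; case: ltP => h; [exact: cut_min1 (ltW h) | exact: cut_min0]. Qed.

Lemma cut_min_lipschitz i t u : cut_min i t - `|u| <= cut_min i (t + u).
Proof.
have key d : cut_min i t - `|u| <= cut_term i d (t + u).
  rewrite cut_termD; have := cut_min_le i d t.
  by have := norm_slopeM_le i d u; rewrite ler_norml => /andP[h1 _]; lra.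
by rewrite {2}/cut_min le_min !key.
Qed.

Lemma cut_sum_affine d t (h h' : 'I_m -> R) :
  cut_sum d (fun i => t * h i + (1 - t) * h' i) = t * cut_sum d h + (1 - t) * cut_sum d h'.
Proof.
rewrite /cut_sum (eq_bigr (fun i => t * cut_term i (d i) (h i) + (1 - t) * cut_term i (d i) (h' i))).
  by rewrite big_split /= -!mulr_sumr.
by move=> i _; rewrite cut_term_affine.
Qed.

Lemma cut_min_sum_label h : cut_min_sum h = cut_sum (fun i => kink_label i (h i)) h.
Proof. by apply: eq_bigr => i _; rewrite cut_min_label. Qed.

Lemma cut_min_sum_le d h : cut_min_sum h <= cut_sum d h.
Proof. by apply: ler_sum => i _; exact: cut_min_le. Qed.

Lemma cut_sum_update d (h h' : 'I_m -> R) k : (forall j, j != k -> h' j = h j) ->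
  cut_sum d h' = cut_sum d h + (cut_term k (d k) (h' k) - cut_term k (d k) (h k)).
Proof. by move=> e; apply: sum_ord_update => j hj; rewrite e. Qed.

Lemma cut_min_sum_update (h h' : 'I_m -> R) k : (forall j, j != k -> h' j = h j) ->
  cut_min_sum h' = cut_min_sum h + (cut_min k (h' k) - cut_min k (h k)).
Proof. by move=> e; apply: sum_ord_update => j hj; rewrite e. Qed.

Lemma RP_mkpt_cuts h z : RP a (mkpt h z) <->
  [/\ forall i, a i - 2^-1 <= h i <= a i + 2^-1, `|z| <= 1 &
      forall d, `|z| <= 2^-1 + cut_sum d h].
Proof.
have xiE d : cut_sum d (xi (mkpt h z)) = cut_sum d h by apply: eq_bigr => i _; rewrite xi_mkpt.
rewrite /RP xn_mkpt; split.
  move=> [hb [hz hd]]; split; first by move=> i; rewrite -(xi_mkpt h z).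
    by rewrite ler_norml.
  move=> d; have [h1 h2] := hd d; move: h1 h2.
  rewrite -/(cut_sum d _) xiE ler_norml => h1 h2; apply/andP; split; lra.
move=> [hb hz hd]; split; first by move=> i; rewrite xi_mkpt.
split; first by rewrite -ler_norml.
move=> d; have := hd d; rewrite -/(cut_sum d _) xiE ler_norml => /andP[h1 h2]; split; lra.
Qed.

Lemma RP_mkpt h z : RP a (mkpt h z) <->
  [/\ forall i, a i - 2^-1 <= h i <= a i + 2^-1, `|z| <= 1 & `|z| <= 2^-1 + cut_min_sum h].
Proof.
rewrite RP_mkpt_cuts; split => -[hb hz hd]; split => //.
  by rewrite cut_min_sum_label; exact: hd.
by move=> d; have := cut_min_sum_le d h; lra.
Qed.

Lemma base_in T eps i : i \in T -> base a T eps i = a i - 2^-1 + (eps i)%:R.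
Proof. by move=> h; rewrite /base h. Qed.

Lemma base_out T eps i : i \notin T -> base a T eps i = 2^-1 - a i.
Proof. by move=> h; rewrite /base (negbTE h). Qed.

Lemma base_box T eps i : a i - 2^-1 <= base a T eps i <= a i + 2^-1.
Proof.
have /andP[h1 h2] := ha i; rewrite /base; case: ifP => _.
  by case: (eps i) => /=; apply/andP; split; lra.
by apply/andP; split; lra.
Qed.

Lemma cut_term_base_in T eps i : i \in T -> cut_term i (eps i) (base a T eps i) = - delta i.
Proof. by move=> h; rewrite base_in // /cut_term /delta /Delta_; case: (eps i) => /=; field. Qed.

Lemma cut_term_base_out T eps i d : i \notin T -> cut_term i d (base a T eps i) = delta i.
Proof. by move=> h; rewrite base_out // cut_term_kink. Qed.

Lemma kink_label_base T eps i : i \in T -> kink_label i (base a T eps i) = eps i.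
Proof.
move=> h; rewrite base_in // /kink_label; have /andP[h1 h2] := ha i.
case: (eps i) => /=; first by apply/idP; lra.
by apply/negbTE; rewrite -leNgt; lra.
Qed.

Lemma cut_min_base T eps j : cut_min j (base a T eps j) = cut_term j (eps j) (base a T eps j).
Proof.
rewrite cut_min_label; case: (boolP (j \in T)) => hj; first by rewrite kink_label_base.
by rewrite !cut_term_base_out.
Qed.

Lemma cut_sum_base T eps d : {in T, d =1 eps} -> cut_sum d (base a T eps) = KS a T - 2^-1.
Proof.
move=> hd; rewrite /cut_sum (bigID (fun j => j \in T)) /=.
rewrite (eq_bigr (fun j => - delta j)); last by move=> j /= hj; rewrite (hd j hj) cut_term_base_in.
rewrite (eq_bigr delta); last by move=> j /= hj; rewrite cut_term_base_out.
have eC : \sum_(j in ~: T) Delta_ (a j) = \sum_(j < m | j \notin T) delta j.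
  by apply: eq_bigl => j; rewrite in_setC.
by rewrite sumrN /KS /DeltaS eC /delta; lra.
Qed.

Lemma cut_min_sum_base T eps : cut_min_sum (base a T eps) = KS a T - 2^-1.
Proof. by rewrite cut_min_sum_label; apply: cut_sum_base => j hj; rewrite kink_label_base. Qed.

Lemma KS_setU1 k T : k \notin T -> KS a (k |: T) = KS a T - 2 * delta k.
Proof.
move=> hk; have e : ~: T = k |: ~: (k |: T).
  by apply/setP => j; rewrite !inE; case: eqP => // ->; rewrite hk.
by rewrite /KS /DeltaS e !big_setU1 //= ?inE ?eqxx // /delta; lra.
Qed.

Lemma cut_sum_kink_off T eps d h : {in T, d =1 eps} ->
  (forall j, j \notin T -> h j = 2^-1 - a j) -> cut_sum d h = cut_sum eps h.
Proof.
move=> hd hh; apply: eq_bigr => j _; case: (boolP (j \in T)) => hj; first by rewrite hd.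
by rewrite hh // !cut_term_kink.
Qed.

Definition keeps_tight (h : 'I_m -> R) (z : R) (hy : 'I_m -> R) (zy : R) :=
  [/\ forall i, h i = a i - 2^-1 -> hy i = a i - 2^-1,
      forall i, h i = a i + 2^-1 -> hy i = a i + 2^-1,
      z = 1 -> zy = 1, z = -1 -> zy = -1 &
      forall d (s : bool), (-1) ^+ s * z = 2^-1 + cut_sum d h ->
                           (-1) ^+ s * zy = 2^-1 + cut_sum d hy].

Lemma keeps_tight_convex t (h hy hy' : 'I_m -> R) z zy zy' :
  RP a (mkpt hy zy) -> RP a (mkpt hy' zy') -> 0 < t < 1 ->
  (forall i, h i = t * hy i + (1 - t) * hy' i) -> z = t * zy + (1 - t) * zy' ->
  keeps_tight h z hy zy.
Proof.
move=> /RP_mkpt_cuts[b1 n1 d1] /RP_mkpt_cuts[b2 n2 d2] ht eh ez.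
move: n1 n2; rewrite !ler_norml => /andP[n1 n1'] /andP[n2 n2']; split.
- move=> i hi; have /andP[l1 _] := b1 i; have /andP[l2 _] := b2 i.
  by apply: (convex_eq_lb l1 l2 ht); rewrite -eh hi.
- move=> i hi; have /andP[_ u1] := b1 i; have /andP[_ u2] := b2 i.
  by apply: (convex_eq_ub u1 u2 ht); rewrite -eh hi.
- by move=> hz; apply: (convex_eq_ub n1' n2' ht); rewrite -ez hz.
- by move=> hz; apply: (convex_eq_lb n1 n2 ht); rewrite -ez hz.
- move=> d s e.
  have p1 : (-1) ^+ s * zy - cut_sum d hy <= 2^-1.
    by have := d1 d; have := signr_le_norm s zy; lra.
  have p2 : (-1) ^+ s * zy' - cut_sum d hy' <= 2^-1.
    by have := d2 d; have := signr_le_norm s zy'; lra.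
  have eF : cut_sum d h = cut_sum d (fun i => t * hy i + (1 - t) * hy' i).
    by apply: eq_bigr => i _; rewrite eh.
  have := convex_eq_ub p1 p2 ht.
  have -> : t * ((-1) ^+ s * zy - cut_sum d hy) + (1 - t) * ((-1) ^+ s * zy' - cut_sum d hy') =
           (-1) ^+ s * z - cut_sum d h by rewrite eF cut_sum_affine ez; ring.
  by move=> /(_ ltac:(lra)); lra.
Qed.

Lemma vertex_of_keeps_tight (h : 'I_m -> R) z : RP a (mkpt h z) ->
  (forall hy zy, RP a (mkpt hy zy) -> keeps_tight h z hy zy -> hy =1 h /\ zy = z) ->
  is_vertex (RP a) (mkpt h z).
Proof.
move=> hx uniq; split => // y y' t hy hy' ht e.
rewrite (mkpt_eta y) in hy; rewrite (mkpt_eta y') in hy'.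
have eh i : h i = t * xi y i + (1 - t) * xi y' i by rewrite -(xi_mkpt h z i) e xiD_scale.
have ez : z = t * xn y + (1 - t) * xn y' by rewrite -(xn_mkpt h z) e xnD_scale.
have [k1 k2] := uniq _ _ hy (keeps_tight_convex hy hy' ht eh ez).
have ht' : 0 < 1 - t < 1 by case/andP: ht => ? ?; apply/andP; split; lra.
have eh' i : h i = (1 - t) * xi y' i + (1 - (1 - t)) * xi y i by rewrite eh; ring.
have ez' : z = (1 - t) * xn y' + (1 - (1 - t)) * xn y by rewrite ez; ring.
have [k1' k2'] := uniq _ _ hy' (keeps_tight_convex hy' hy ht' eh' ez').
by apply: pt_ext => [i|]; rewrite ?k1 ?k1' ?k2 ?k2'.
Qed.

(* Flipping the label of [i] outside [T] keeps the cut tight only at the kink. *)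
Lemma tight_cuts_kink T eps (hy : 'I_m -> R) zy (s : bool) c :
  (forall d, {in T, d =1 eps} -> (-1) ^+ s * zy = c + cut_sum d hy) ->
  forall i, i \notin T -> hy i = 2^-1 - a i.
Proof.
move=> H i hi; pose d b := fun j => if j == i then b else eps j.
have agree b : {in T, d b =1 eps}.
  by move=> j hj; rewrite /d; case: eqP => // ej; move: hj; rewrite ej (negbTE hi).
have := @sum_ord_update _ _ (fun j => cut_term j (d false j) (hy j))
                            (fun j => cut_term j (d true j) (hy j)) i.
rewrite /d eqxx => /(_ ltac:(by move=> j hj; rewrite (negbTE hj))).
rewrite -/(cut_sum (d false) hy) -/(cut_sum (d true) hy) => E.
by have := H _ (agree false); have := H _ (agree true); have := cut_term01 i (hy i); lra.
Qed.

Lemma standard_vertex_is_vertex x : standard_vertex a x -> is_vertex (RP a) x.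
Proof.
move=> [T [eps [s [/andP[k0 k1] ->]]]]; apply: vertex_of_keeps_tight.
  apply/RP_mkpt; split; first by move=> i; exact: base_box.
    by rewrite normrMsign ger0_norm.
  by rewrite normrMsign cut_min_sum_base ger0_norm //; lra.
move=> hy zy hR [A1 A2 _ _ A5].
have tight d : {in T, d =1 eps} -> (-1) ^+ s * zy = 2^-1 + cut_sum d hy.
  by move=> hd; apply: A5; rewrite cut_sum_base // signrMK; lra.
have hyE : hy =1 base a T eps.
  move=> i; case: (boolP (i \in T)) => hi; last by rewrite base_out //; exact: (tight_cuts_kink tight).
  have /andP[h1 h2] := ha i.
  rewrite base_in //; case e: (eps i) => /=.
    by rewrite A2 ?base_in ?e //=; lra.
  by rewrite A1 ?base_in ?e //=; lra.
have eF : cut_sum eps hy = cut_sum eps (base a T eps) by apply: eq_bigr => i _; rewrite hyE.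
split => //; have := tight eps (fun _ _ => erefl); rewrite eF cut_sum_base // => E.
by rewrite -[zy](signrMK s) E; congr (_ * _); lra.
Qed.

Definition shifted_base T eps k (c : R) : 'I_m -> R :=
  fun i => if i == k then base a T eps i + c else base a T eps i.

Section Shifted.
Variables (T : {set 'I_m}) (eps : 'I_m -> bool) (k : 'I_m) (c : R).
Hypothesis kT : k \in T.
Let h := shifted_base T eps k c.

Lemma cut_sum_shifted d : {in T, d =1 eps} ->
  cut_sum d h = KS a T - 2^-1 + (2 * a k - (eps k)%:R) * c.
Proof.
move=> hd; rewrite (@cut_sum_update d (base a T eps) h k).
  by rewrite (cut_sum_base hd) /h /shifted_base eqxx cut_termD (hd k kT); ring.
by move=> j hj; rewrite /h /shifted_base (negbTE hj).
Qed.

Lemma shifted_base_kink j : j \notin T -> h j = 2^-1 - a j.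
Proof.
move=> hj; rewrite /h /shifted_base; case: eqP => [e|_]; last by rewrite base_out.
by move: hj; rewrite e kT.
Qed.

Hypotheses (hbox : a k - 2^-1 <= base a T eps k + c <= a k + 2^-1)
  (hlabel : cut_min k (base a T eps k + c) = cut_term k (eps k) (base a T eps k + c)).

Lemma RP_shifted z : `|z| <= 1 -> `|z| <= KS a T + (2 * a k - (eps k)%:R) * c ->
  RP a (mkpt h z).
Proof.
move=> hz1 hz2; apply/RP_mkpt; split => //.
  by move=> i; rewrite /h /shifted_base; case: eqP => [->|_] //; exact: base_box.
have -> : cut_min_sum h = cut_sum eps h.
  apply: eq_bigr => j _; rewrite /h /shifted_base; case: eqP => [->|_]; first exact: hlabel.
  exact: cut_min_base.
by rewrite cut_sum_shifted //; lra.
Qed.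

Lemma keeps_tight_shifted z hy zy (s : bool) cc : keeps_tight h z hy zy ->
  (forall d, {in T, d =1 eps} -> (-1) ^+ s * zy = cc + cut_sum d hy) ->
  (forall j, j != k -> hy j = h j) /\
  (cut_sum eps hy = cut_sum eps h -> hy k = h k).
Proof.
move=> [A1 A2 _ _ _] tight.
have others j : j != k -> hy j = h j.
  move=> hj; rewrite /h /shifted_base (negbTE hj).
  case: (boolP (j \in T)) => hjT; last by rewrite base_out //; exact: (tight_cuts_kink tight).
  have /andP[h1 h2] := ha j.
  rewrite base_in //; case e: (eps j) => /=.
    by rewrite A2; [lra|]; rewrite /h /shifted_base (negbTE hj) base_in // e /=; lra.
  by rewrite A1; [lra|]; rewrite /h /shifted_base (negbTE hj) base_in // e /=; lra.
split=> // e; move: e; rewrite (@cut_sum_update eps h hy k) // => e.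
have : cut_term k (eps k) (hy k) = cut_term k (eps k) (h k) by lra.
rewrite -{1}(subrK (h k) (hy k)) addrC cut_termD => e2.
have : (2 * a k - (eps k)%:R) * (hy k - h k) = 0 by lra.
by move/eqP; rewrite mulf_eq0 (negbTE (slope_neq0 _ _)) /= subr_eq0 => /eqP.
Qed.

Lemma shifted_vertex0 : KS a T + (2 * a k - (eps k)%:R) * c = 0 ->
  is_vertex (RP a) (mkpt h 0).
Proof.
move=> hK; apply: vertex_of_keeps_tight.
  by apply: RP_shifted; rewrite normr0 ?hK.
move=> hy zy hR A; have [_ _ _ _ A5] := A.
have tight (s : bool) d : {in T, d =1 eps} -> (-1) ^+ s * zy = 2^-1 + cut_sum d hy.
  move=> hd; apply: A5; rewrite mulr0 (@cut_sum_kink_off T eps) //; last exact: shifted_base_kink.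
  by rewrite cut_sum_shifted //; lra.
have [others pin] := keeps_tight_shifted A (tight false).
have ez : zy = 0.
  have := tight false eps (fun _ _ => erefl); have := tight true eps (fun _ _ => erefl).
  by rewrite /= expr0 expr1 mul1r mulN1r; lra.
split => // i; case: (eqVneq i k) => [->|hi]; last exact: others.
apply: pin; have := tight false eps (fun _ _ => erefl).
by rewrite expr0 mul1r ez cut_sum_shifted //; lra.
Qed.

Lemma shifted_vertex1 (s : bool) : KS a T + (2 * a k - (eps k)%:R) * c = 1 ->
  is_vertex (RP a) (mkpt h ((-1) ^+ s)).
Proof.
move=> hK; apply: vertex_of_keeps_tight.
  by apply: RP_shifted; rewrite normr_sign ?hK.
move=> hy zy hR A; have [_ _ A3 A4 A5] := A.
have tight d : {in T, d =1 eps} -> (-1) ^+ s * zy = 2^-1 + cut_sum d hy.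
  move=> hd; apply: A5; rewrite -expr2 sqrr_sign (@cut_sum_kink_off T eps) //;
    last exact: shifted_base_kink.
  by rewrite cut_sum_shifted //; lra.
have [others pin] := keeps_tight_shifted A tight.
have ez : zy = (-1) ^+ s.
  by move: A3 A4; case: (s) => /= A3 A4; [rewrite expr1 A4 // expr1 | rewrite expr0 A3 // expr0].
split => // i; case: (eqVneq i k) => [->|hi]; last exact: others.
apply: pin; have := tight eps (fun _ _ => erefl).
by rewrite ez -expr2 sqrr_sign cut_sum_shifted //; lra.
Qed.

End Shifted.

Lemma middle_vertex_is_vertex x : middle_vertex a x -> is_vertex (RP a) x.
Proof.
move=> [T [eps [k [hk [/andP[K1 K2] ->]]]]].
have hK : KS a T = KS a (T :\ k) - 2 * delta k by rewrite -{1}(setD1K hk) KS_setU1 // setD11.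
have /andP[a1 a2] := ha k.
pose q := KS a T / (2 * a k - (eps k)%:R).
have qe : q * (2 * a k - (eps k)%:R) = KS a T by rewrite divfK ?slope_neq0.
rewrite (@eq_mkpt _ _ _ (shifted_base T eps k (- q))); last first.
  by move=> i; rewrite /shifted_base; case: eqP => [->|//]; rewrite base_in.
have hlin : KS a T + (2 * a k - (eps k)%:R) * - q = 0 by rewrite mulrN (mulrC _ q) qe subrr.
suff [hb hl] : a k - 2^-1 <= base a T eps k + - q <= a k + 2^-1 /\
  cut_min k (base a T eps k + - q) = cut_term k (eps k) (base a T eps k + - q).
  exact: shifted_vertex0.
move: qe hK; rewrite base_in // /delta /Delta_;
  case: (eps k) => /= qe hK; rewrite ?mulr1n ?mulr0n ?subr0 in qe *.
- have q0 : 0 < q by nra.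
  have q1 : q <= 2 * a k by nra.
  by split; [apply/andP; split; lra | rewrite cut_min1 //; lra].
- have q0 : q < 0 by nra.
  have q1 : - q <= 1 - 2 * a k by nra.
  by split; [apply/andP; split; lra | rewrite cut_min0 //; lra].
Qed.

Lemma truncating_vertex_is_vertex x : truncating_vertex a x -> is_vertex (RP a) x.
Proof.
move=> [S [eps [k [s [hk [/andP[K1 K2] ->]]]]]].
have hK := KS_setU1 hk.
have /andP[a1 a2] := ha k.
have kS : k \in k |: S by exact: setU11.
pose q := (1 - KS a (k |: S)) / (2 * a k - (eps k)%:R).
have qe : q * (2 * a k - (eps k)%:R) = 1 - KS a (k |: S) by rewrite divfK ?slope_neq0.
rewrite (@eq_mkpt _ _ _ (shifted_base (k |: S) eps k q)); last first.
  move=> i; rewrite /shifted_base; case: eqP => [->|/eqP ne]; first by rewrite base_in.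
  by rewrite /base in_setU1 (negbTE ne).
have hlin : KS a (k |: S) + (2 * a k - (eps k)%:R) * q = 1 by rewrite (mulrC _ q) qe; ring.
suff [hb hl] : a k - 2^-1 <= base a (k |: S) eps k + q <= a k + 2^-1 /\
  cut_min k (base a (k |: S) eps k + q) = cut_term k (eps k) (base a (k |: S) eps k + q).
  exact: shifted_vertex1.
move: qe hK; rewrite base_in // /delta /Delta_;
  case: (eps k) => /= qe hK; rewrite ?mulr1n ?mulr0n ?subr0 in qe *.
- have q0 : q < 0 by nra.
  have q1 : - q <= 2 * a k by nra.
  by split; [apply/andP; split; lra | rewrite cut_min1 //; lra].
- have q0 : 0 < q by nra.
  have q1 : q <= 1 - 2 * a k by nra.
  by split; [apply/andP; split; lra | rewrite cut_min0 //; lra].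
Qed.

Lemma not_vertex_segment (h : 'I_m -> R) z (dh : 'I_m -> R) dz :
  (forall s : bool, RP a (mkpt (fun i => h i + (-1) ^+ s * dh i) (z + (-1) ^+ s * dz))) ->
  ((exists i, dh i != 0) \/ dz != 0) -> ~ is_vertex (RP a) (mkpt h z).
Proof.
move=> H hne [_ V].
have ht : 0 < (2^-1 : R) < 1 by apply/andP; split; lra.
have e := V _ _ (2^-1) (H false) (H true) ht.
have /mkpt_inj[e1 e2] := e ltac:(apply: pt_ext => [i|];
  rewrite ?xiD_scale ?xnD_scale ?xi_mkpt ?xn_mkpt expr0 expr1 mul1r mulN1r; lra).
move: e1 e2; rewrite expr0 expr1 => e1 e2.
case: hne => [[i /eqP hi]|/eqP hz]; [have := e1 i|]; rewrite ?mul1r ?mulN1r; lra.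
Qed.

Lemma not_vertex_shift_z (h : 'I_m -> R) z : RP a (mkpt h z) ->
  `|z| < 1 -> `|z| < 2^-1 + cut_min_sum h -> ~ is_vertex (RP a) (mkpt h z).
Proof.
move=> /RP_mkpt[hb _ _] h1 h2.
have [u u0 [u1 u2]] := exists_pos_le2 (p := 1 - `|z|) (q := 2^-1 + cut_min_sum h - `|z|)
  ltac:(lra) ltac:(lra).
apply: (@not_vertex_segment h z (fun _ => 0) u); last by right; exact: lt0r_neq0.
move=> s; apply/RP_mkpt.
have eh : cut_min_sum (fun i => h i + (-1) ^+ s * 0) = cut_min_sum h.
  by apply: eq_bigr => i _; rewrite mulr0 addr0.
split; first by move=> i; rewrite mulr0 addr0.
all: rewrite ?eh; have := ler_normD z ((-1) ^+ s * u); rewrite normrMsign (ger0_norm (ltW u0)); lra.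
Qed.

Lemma not_vertex_shift_coord (h : 'I_m -> R) z i u : RP a (mkpt h z) -> 0 < u ->
  (forall s : bool,
     a i - 2^-1 <= h i + (-1) ^+ s * u <= a i + 2^-1 /\
     `|z| <= 2^-1 + cut_min_sum h + (cut_min i (h i + (-1) ^+ s * u) - cut_min i (h i))) ->
  ~ is_vertex (RP a) (mkpt h z).
Proof.
move=> /RP_mkpt[hb hz _] u0 H.
apply: (@not_vertex_segment h z (fun j => if j == i then u else 0) 0); last first.
  by left; exists i; rewrite eqxx gt_eqF.
move=> s; have [Hb HG] := H s; apply/RP_mkpt; split.
- by move=> j; case: eqP => [->|_] //; rewrite mulr0 addr0.
- by rewrite mulr0 addr0.
rewrite mulr0 addr0 (@cut_min_sum_update h _ i); first by rewrite /= eqxx addrA.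
by move=> j hj; rewrite (negbTE hj) mulr0 addr0.
Qed.

Definition free_coord (h : 'I_m -> R) i :=
  (a i - 2^-1 < h i < a i + 2^-1) && (h i != 2^-1 - a i).

Lemma cut_min_free_affine h i : free_coord h i ->
  exists2 g, 0 < g & forall v, `|v| <= g ->
    a i - 2^-1 <= h i + v <= a i + 2^-1 /\
    cut_min i (h i + v) = cut_min i (h i) + (2 * a i - (kink_label i (h i))%:R) * v.
Proof.
move=> /andP[/andP[t1 t2] tn]; have /andP[a1 a2] := ha i.
rewrite /kink_label; case: (ltP (2^-1 - a i) (h i)) => s.
- have [g g0 [g1 g2]] := exists_pos_le2 (p := h i - (2^-1 - a i)) (q := a i + 2^-1 - h i)
    ltac:(lra) ltac:(lra).
  exists g => // v; rewrite ler_norml => /andP[v1 v2]; split; first by apply/andP; split; lra.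
  by rewrite !cut_min1 ?cut_termD //; lra.
- have s' : h i < 2^-1 - a i by rewrite lt_neqAle tn.
  have [g g0 [g1 g2]] := exists_pos_le2 (p := h i - (a i - 2^-1)) (q := 2^-1 - a i - h i)
    ltac:(lra) ltac:(lra).
  exists g => // v; rewrite ler_norml => /andP[v1 v2]; split; first by apply/andP; split; lra.
  by rewrite !cut_min0 ?cut_termD //; lra.
Qed.

Lemma cut_term_free_bounds h i : free_coord h i ->
  - delta i < cut_term i (kink_label i (h i)) (h i) < delta i.
Proof.
move=> /andP[/andP[t1 t2] tn]; have /andP[a1 a2] := ha i.
rewrite /delta /Delta_ /kink_label; case: (ltP (2^-1 - a i) (h i)) => s.
- by rewrite cut_term1; apply/andP; split; nra.
- have s' : h i < 2^-1 - a i by rewrite lt_neqAle tn.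
  by rewrite cut_term0; apply/andP; split; nra.
Qed.

Lemma coord_of_cut_term i (e : bool) t :
  t = a i - 2^-1 + e%:R + (delta i + cut_term i e t) / (2 * a i - e%:R).
Proof.
have := slope_neq0 i e; have /andP[a1 a2] := ha i.
rewrite /delta /Delta_ /cut_term; case: e => /= hne; field; rewrite ?hne //; exact: lt0r_neq0.
Qed.

Section Vertex.
Variables (h : 'I_m -> R) (z : R).
Hypothesis V : is_vertex (RP a) (mkpt h z).

Let box : forall i, a i - 2^-1 <= h i <= a i + 2^-1.
Proof. by have [/RP_mkpt[]] := V. Qed.

Let S := [set i | (h i == a i - 2^-1) || (h i == a i + 2^-1)].
Let eps i := kink_label i (h i).

Lemma base_of_not_free i : ~~ free_coord h i -> h i = base a S eps i.
Proof.
move=> hf; have /andP[a1 a2] := ha i; have /andP[b1 b2] := box i.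
rewrite /base inE /eps /kink_label.
case: (eqVneq (h i) (a i - 2^-1)) => [->|n1] /=.
  by rewrite (_ : (_ < _) = false) ?mulr0n ?addr0 //; apply/negbTE; rewrite -leNgt; lra.
case: (eqVneq (h i) (a i + 2^-1)) => [->|n2] /=.
  by rewrite (_ : (_ < _) = true) ?mulr1n; [lra | apply/idP; lra].
move: hf; rewrite /free_coord negb_and negbK => /orP[|/eqP //].
by rewrite !lt_neqAle b1 b2 eq_sym n1 n2.
Qed.

Lemma free_notin_S i : free_coord h i -> i \notin S.
Proof. by move=> /andP[/andP[l u] _]; rewrite inE (gt_eqF l) (lt_eqF u). Qed.

(* Moving two free coordinates in opposite directions, weighted by each
   other's slope, leaves [cut_min_sum] unchanged. *)
Lemma free_coord_unique i k : free_coord h i -> free_coord h k -> i = k.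
Proof.
move=> fi fk; case: (eqVneq i k) => // ne; exfalso.
have [gi gi0 Hi] := cut_min_free_affine fi; have [gk gk0 Hk] := cut_min_free_affine fk.
have [u u0 [ui uk]] := exists_pos_le2 gi0 gk0.
pose si := 2 * a i - (kink_label i (h i))%:R; pose sk := 2 * a k - (kink_label k (h k))%:R.
pose dh j := if j == i then sk * u else if j == k then (- si * u) else 0.
apply: (@not_vertex_segment h z dh 0 _ _ V); last first.
  by left; exists i; rewrite /dh eqxx mulf_neq0 ?slope_neq0 ?lt0r_neq0.
move=> s; pose r : R := (-1) ^+ s; pose h' j := h j + r * dh j.
have small (sl : R) v : `|sl * v| <= `|v| -> `|v| <= u -> `|r * (sl * v)| <= u.
  by move=> h1 h2; rewrite /r normrMsign (le_trans h1 h2).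
have nu : `|u| <= u by rewrite ger0_norm // ltW.
have [Bi Gi] := Hi (r * (sk * u)) (le_trans (small sk u (norm_slopeM_le _ _ _) nu) ui).
have [Bk Gk] := Hk (r * (- si * u))
  (le_trans (small (- si) u ltac:(rewrite mulNr normrN; exact: norm_slopeM_le) nu) uk).
have h'i : h' i = h i + r * (sk * u) by rewrite /h' /dh eqxx.
have h'k : h' k = h k + r * (- si * u) by rewrite /h' /dh eq_sym (negbTE ne) eqxx.
have h'o j : j != i -> j != k -> h' j = h j.
  by move=> nji njk; rewrite /h' /dh (negbTE nji) (negbTE njk) mulr0 addr0.
pose h1 j := if j == k then h' j else h j.
have E1 : cut_min_sum h' = cut_min_sum h1 + (cut_min i (h' i) - cut_min i (h1 i)).
  apply: cut_min_sum_update => j nji; rewrite /h1; case: (eqVneq j k) => // njk.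
  by rewrite h'o.
have E2 : cut_min_sum h1 = cut_min_sum h + (cut_min k (h1 k) - cut_min k (h k)).
  by apply: cut_min_sum_update => j njk; rewrite /h1 (negbTE njk).
have eG : cut_min_sum h' = cut_min_sum h.
  rewrite E1 E2 /h1 (negbTE ne) eqxx h'i h'k Gi Gk -/si -/sk; ring.
have [_ hz hG] := (RP_mkpt h z).1 V.1.
apply/RP_mkpt; rewrite mulr0 addr0 -/r; split => //; first last.
  by rewrite -/h' eG.
move=> j; rewrite -/(h' j); case: (eqVneq j i) => [->|nji]; first by rewrite h'i.
case: (eqVneq j k) => [->|njk]; first by rewrite h'k.
by rewrite h'o.
Qed.

Lemma vertex_without_free_coord : (forall i, ~~ free_coord h i) ->
  standard_vertex a (mkpt h z).
Proof.
move=> nofree; have [_ hz hG] := (RP_mkpt h z).1 V.1.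
have hS : h =1 base a S eps by move=> i; exact: base_of_not_free.
have eG : cut_min_sum h = KS a S - 2^-1.
  by rewrite -(cut_min_sum_base S eps); apply: eq_bigr => i _; rewrite hS.
case: (eqVneq `|z| (KS a S)) => [ez|nez].
  exists S, eps, (z < 0)%R; split; first by rewrite -ez normr_ge0 hz.
  by rewrite {1}(numEsign z) ez; exact: eq_mkpt.
exfalso; have lt : `|z| < KS a S by rewrite lt_neqAle nez /=; lra.
case: (eqVneq `|z| 1) => [z1|nz1]; last first.
  by apply: (not_vertex_shift_z V.1 _ _ V); rewrite ?lt_neqAle ?nz1 ?hz // eG; lra.
(* [|z| = 1 < K(S)]: move a coordinate sitting at its kink; one exists because
   [K] of the full set is at most [1/2]. *)
case: (pickP (fun i => i \notin S)) => [i hi | none]; last first.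
  have D0 : DeltaS a (~: S) = 0.
    by rewrite /DeltaS big_pred0 // => j; rewrite in_setC; exact: none.
  have D1 : 0 <= DeltaS a S by apply: sumr_ge0 => j _; exact: ltW (delta_gt0 j).
  by move: lt; rewrite /KS D0 z1; lra.
have /andP[a1 a2] := ha i.
have [u1 u10 [u11 u12]] := exists_pos_le2 (p := 2 * a i) (q := 1 - 2 * a i) ltac:(lra) ltac:(lra).
have [u u0 [u2 u3]] := exists_pos_le2 (p := u1) (q := KS a S - 1) u10 ltac:(lra).
apply: (not_vertex_shift_coord (i := i) V.1 u0 _ V) => s.
have hi' : h i = 2^-1 - a i by rewrite hS base_out.
split; first by rewrite hi'; case: (s); rewrite ?expr0 ?expr1 ?mul1r ?mulN1r; apply/andP; split; lra.
have := cut_min_lipschitz i (h i) ((-1) ^+ s * u).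
by rewrite normrMsign ger0_norm ?(ltW u0) // eG; lra.
Qed.

Lemma vertex_free_tight k : free_coord h k -> `|z| = 2^-1 + cut_min_sum h.
Proof.
move=> fk; have [_ hz hG] := (RP_mkpt h z).1 V.1.
case: (eqVneq `|z| (2^-1 + cut_min_sum h)) => [//|nez]; exfalso.
have lt : `|z| < 2^-1 + cut_min_sum h by rewrite lt_neqAle nez hG.
case: (eqVneq `|z| 1) => [z1|nz1]; last first.
  by apply: (not_vertex_shift_z V.1 _ lt V); rewrite lt_neqAle nz1 hz.
have [g g0 Hg] := cut_min_free_affine fk.
have [u u0 [u2 u3]] := exists_pos_le2 (p := g) (q := 2^-1 + cut_min_sum h - 1) g0 ltac:(lra).
apply: (not_vertex_shift_coord (i := k) V.1 u0 _ V) => s.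
have nu : `|(-1) ^+ s * u| = u by rewrite normrMsign ger0_norm // ltW.
have [Bk Gk] := Hg ((-1) ^+ s * u) ltac:(by rewrite nu).
split => //; rewrite Gk.
by have := norm_slopeM_le k (kink_label k (h k)) ((-1) ^+ s * u); rewrite nu ler_norml; lra.
Qed.

(* Otherwise move [h k] and scale [z] along so that the constraint stays tight. *)
Lemma vertex_free_z01 k : free_coord h k -> `|z| = 0 \/ `|z| = 1.
Proof.
move=> fk; have ez := vertex_free_tight fk; have [_ hz _] := (RP_mkpt h z).1 V.1.
case: (eqVneq `|z| 0) => [|nz0]; first by left.
case: (eqVneq `|z| 1) => [|nz1]; first by right.
exfalso; set c := 2^-1 + cut_min_sum h in ez.
have cpos : 0 < c by rewrite -ez lt_neqAle eq_sym nz0 normr_ge0.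
have c1 : c < 1 by rewrite -ez lt_neqAle nz1 hz.
have [g g0 Hg] := cut_min_free_affine fk.
have [u1 u10 [u11 u12]] := exists_pos_le2 (p := c) (q := 1 - c) cpos ltac:(lra).
have [u u0 [u2 u3]] := exists_pos_le2 (p := u1) (q := g) u10 g0.
pose sg := 2 * a k - (kink_label k (h k))%:R.
apply: (@not_vertex_segment h z (fun j => if j == k then u else 0) (z / c * sg * u) _ _ V);
  last by left; exists k; rewrite eqxx; exact: lt0r_neq0.
move=> s; have nu : `|(-1) ^+ s * u| = u by rewrite normrMsign ger0_norm // ltW.
have [Bk Gk] := Hg ((-1) ^+ s * u) ltac:(by rewrite nu).
have /andP[sl su] : - u <= sg * ((-1) ^+ s * u) <= u.
  by have := norm_slopeM_le k (kink_label k (h k)) ((-1) ^+ s * u); rewrite nu ler_norml.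
have eG : cut_min_sum (fun j => h j + (-1) ^+ s * (if j == k then u else 0)) =
          cut_min_sum h + sg * ((-1) ^+ s * u).
  rewrite (@cut_min_sum_update h _ k) /=; last by move=> j hj; rewrite (negbTE hj) mulr0 addr0.
  by rewrite eqxx Gk /sg; ring.
have ez' : z + (-1) ^+ s * (z / c * sg * u) = z / c * (c + sg * ((-1) ^+ s * u)).
  by field; apply: lt0r_neq0.
have nzc : `|z / c| = 1 by rewrite normrM normfV ez (gtr0_norm cpos) divff // lt0r_neq0.
apply/RP_mkpt; rewrite eG ez' normrM nzc mul1r ger0_norm; last by lra.
split; [by move=> j; case: eqP => [->|_] //; rewrite mulr0 addr0 | lra | rewrite /c; lra].
Qed.

Lemma vertex_with_free_coord k : free_coord h k ->
  middle_vertex a (mkpt h z) \/ truncating_vertex a (mkpt h z).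
Proof.
move=> fk; have ez := vertex_free_tight fk.
have others j : j != k -> h j = base a S eps j.
  move=> hj; apply: base_of_not_free; apply/negP => fj.
  by move: hj; rewrite (free_coord_unique fj fk) eqxx.
have kS := free_notin_S fk.
have /andP[bl bu] := cut_term_free_bounds fk.
have eG : cut_min_sum h = KS a S - 2^-1 + cut_term k (eps k) (h k) - delta k.
  rewrite cut_min_sum_label -/eps (@cut_sum_update eps (base a S eps) h k) // cut_sum_base //.
  by rewrite cut_term_base_out //; ring.
case: (vertex_free_z01 fk) => [z0|z1].
  left; exists (k |: S), eps, k; split; first exact: setU11.
  split; first by rewrite KS_setU1 // setU1K //; apply/andP; split; lra.
  have -> : z = 0 by apply/eqP; rewrite -normr_eq0 z0.
  apply: eq_mkpt => i; case: eqP => [->|/eqP ne].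
    rewrite {1}(coord_of_cut_term k (eps k) (h k)).
    by rewrite (_ : delta k + _ = - KS a (k |: S)) ?mulNr // KS_setU1 //; lra.
  by rewrite others // /base in_setU1 (negbTE ne).
right; exists S, eps, k, (z < 0)%R; split => //.
split; first by rewrite KS_setU1 //; lra.
rewrite {1}(numEsign z) z1 mulr1; apply: eq_mkpt => i.
case: eqP => [->|/eqP ne]; last exact: others.
rewrite {1}(coord_of_cut_term k (eps k) (h k)); congr (_ + _ / _).
by rewrite KS_setU1 //; lra.
Qed.

End Vertex.

End Polytope.

Theorem theorem4p2 (R : realFieldType) (m : nat) (hm : (1 <= m)%N) (a : 'I_m -> R)
  (ha : forall i : 'I_m, 0 < a i < 2^-1) (x : 'rV[R]_(m + 1)) :
  is_vertex (RP a) x <->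
  (standard_vertex a x \/ middle_vertex a x \/ truncating_vertex a x).
Proof.
split; last first.
  case=> [|[]]; [exact: standard_vertex_is_vertex | exact: middle_vertex_is_vertex |
                 exact: truncating_vertex_is_vertex].
rewrite (mkpt_eta x) => V.
case: (pickP (free_coord a (xi x))) => [k fk | nofree].
  by right; exact: (vertex_with_free_coord ha V fk).
by left; apply: (vertex_without_free_coord ha V) => i; rewrite nofree.
Qed.
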